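(* Let $\widetilde C,\widetilde C',\widetilde C''$ be $r$-perfect $\mathcal S$-complexes, and let $\widetilde\lambda:\widetilde C\to\widetilde C'$ and $\widetilde\lambda':\widetilde C'\to\widetilde C''$ be height $n$ and height $m$ morphisms respectively ($n,m\ge0$). Then $\widetilde\lambda'\widetilde\lambda$ is a height $n+m$ morphism. If moreover $\widetilde\lambda$ is strong height $n$ and $\widetilde\lambda'$ is strong height $m$, then $\widetilde\lambda'\widetilde\lambda$ is strong height $n+m$.
   Context: Let $R$ be a commutative ring; graded modules are $\mathbb Z$-graded, $V[i]_j=V_{i+j}$, differentials have degree $-1$. An $\mathcal S$-complex over $R$ is a chain complex $(\widetilde C,\widetilde d)$ of finitely generated free graded $R$-modules with a graded decomposition $\widetilde C=C\oplus C[-1]\oplus\mathsf R$ in which $\widetilde d=\begin{pmatrix} d&0&0\\ v&-d&\delta_2\\ \delta_1&0&r\end{pmatrix}$; it is $r$-perfect if $\mathsf R$ is supported in even degrees (so $r=0$). A degree $k$ morphism is an $R$-linear map of degree $k$ of the form $\begin{pmatrix}\lambda&0&0\\ \mu&\lambda&\Delta_2\\ \Delta_1&0&\rho\end{pmatrix}$ with $\widetilde d'\widetilde\lambda=\widetilde\lambda\widetilde d$; composition is composition of maps. For such a morphism between $r$-perfect complexes set $\tau_0=\rho$ and for $i\ge0$, $\tau_{i+1}=\delta_1'v'^i\Delta_2+\Delta_1v^i\delta_2+\sum_{j=0}^{i-1}\delta_1'v'^j\mu v^{i-1-j}\delta_2$. A height $n$ morphism ($n\ge0$) is an even degree morphism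 between $r$-perfect $\mathcal S$-complexes with $\tau_j=0$ for all $0\le j<n$; it is strong height $n$ if in addition $\tau_n$ is an isomorphism. *)

From HB Require Import structures.
From mathcomp Require Import all_boot all_order all_algebra.
Set Implicit Arguments. Unset Strict Implicit. Unset Printing Implicit Defensive.
Import Order.TTheory GRing.Theory Num.Theory.
Local Open Scope ring_scope.

(* A finitely generated free graded R-module is represented by a homogeneous
   basis 'I_n together with a degree function deg : 'I_n -> int.
   An R-linear map S -> T (column-vector convention, A *m x) is a matrix
   'M_(#T, #S); it has degree k iff every nonzero entry A i j satisfies
   degT i = degS j + k. *)
Definition homog (n m : nat) (dS : 'I_n -> int) (dT : 'I_m -> int) (k : int)
  (R : comPzRingType) (A : 'M[R]_(m, n)) : Prop :=
  forall i j, A i j != 0 -> dT i = (dS j + k)%R.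

Definition mat3 (R : comPzRingType) (m1 m2 m3 n1 n2 n3 : nat)
  (A11 : 'M[R]_(m1, n1)) (A12 : 'M[R]_(m1, n2)) (A13 : 'M[R]_(m1, n3))
  (A21 : 'M[R]_(m2, n1)) (A22 : 'M[R]_(m2, n2)) (A23 : 'M[R]_(m2, n3))
  (A31 : 'M[R]_(m3, n1)) (A32 : 'M[R]_(m3, n2)) (A33 : 'M[R]_(m3, n3))
  : 'M[R]_((m1 + m2) + m3, (n1 + n2) + n3) :=
  block_mx (block_mx A11 A12 A21 A22) (col_mx A13 A23) (row_mx A31 A32) A33.

(* Degrees of the basis of C ⊕ C[-1] ⊕ R, where C[-1]_j = C_(j-1), so a basis
   element of C of degree e sits in degree e+1 in C[-1]. *)
Definition degtot (a b : nat) (dC : 'I_a -> int) (dR : 'I_b -> int)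
  (i : 'I_((a + a) + b)) : int :=
  match split i with
  | inl i' => match split i' with
              | inl i1 => dC i1
              | inr i2 => (dC i2 + 1)%R
              end
  | inr i3 => dR i3
  end.

(* An S-complex over R: C~ = C ⊕ C[-1] ⊕ R with C of rank a, R of rank b. *)
Record Scx (R : comPzRingType) := {
  rkC : nat;
  rkR : nat;
  degC : 'I_rkC -> int;
  degR : 'I_rkR -> int;
  sd : 'M[R]_rkC;
  sv : 'M[R]_rkC;
  sdelta1 : 'M[R]_(rkR, rkC);
  sdelta2 : 'M[R]_(rkC, rkR);
  sr : 'M[R]_rkR
}.
Arguments degC {R} s _.
Arguments degR {R} s _.

Definition dmat (R : comPzRingType) (C : Scx R) :=
  mat3 (sd C) 0 0 (sv C) (- sd C) (sdelta2 C) (sdelta1 C) 0 (sr C).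

Definition degT (R : comPzRingType) (C : Scx R) := degtot (degC C) (degR C).
Arguments degT {R} C _.

Definition is_Scx (R : comPzRingType) (C : Scx R) : Prop :=
  homog (degT C) (degT C) (-1) (dmat C) /\ dmat C *m dmat C = 0.

Definition rperfect (R : comPzRingType) (C : Scx R) : Prop :=
  is_Scx C /\ forall i, (2 %| degR C i)%Z.

Record Smor (R : comPzRingType) (C C' : Scx R) := {
  mlam : 'M[R]_(rkC C', rkC C);
  mmu : 'M[R]_(rkC C', rkC C);
  mDelta2 : 'M[R]_(rkC C', rkR C);
  mDelta1 : 'M[R]_(rkR C', rkC C);
  mrho : 'M[R]_(rkR C', rkR C)
}.

Definition mmat (R : comPzRingType) (C C' : Scx R) (f : Smor C C') :=
  mat3 (mlam f) 0 0 (mmu f) (mlam f) (mDelta2 f) (mDelta1 f) 0 (mrho f).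

Definition is_mor (R : comPzRingType) (C C' : Scx R) (k : int) (f : Smor C C')
  : Prop :=
  homog (degT C) (degT C') k (mmat f) /\ dmat C' *m mmat f = mmat f *m dmat C.

Definition tau (R : comPzRingType) (C C' : Scx R) (f : Smor C C') (i : nat)
  : 'M[R]_(rkR C', rkR C) :=
  match i with
  | 0 => mrho f
  | i'.+1 =>
      sdelta1 C' *m (sv C' ^+ i') *m mDelta2 f
      + mDelta1 f *m (sv C ^+ i') *m sdelta2 C
      + \sum_(j < i') (sdelta1 C' *m (sv C' ^+ j) *m mmu f
                        *m (sv C ^+ (i'.-1 - j)%N) *m sdelta2 C)
  end.

Definition height (R : comPzRingType) (C C' : Scx R) (k : int) (n : nat)
  (f : Smor C C') : Prop :=
  [/\ is_mor k f, (2 %| k)%Z, rperfect C, rperfect C' &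
      forall j, (j < n)%N -> tau f j = 0].

Definition strong_height (R : comPzRingType) (C C' : Scx R) (k : int) (n : nat)
  (f : Smor C C') : Prop :=
  height k n f /\
  exists g : 'M[R]_(rkR C, rkR C'), g *m tau f n = 1%:M /\ tau f n *m g = 1%:M.

From HB Require Import structures.
From mathcomp Require Import all_boot all_order all_algebra.
From mathcomp Require Import zify.
Import Order.TTheory GRing.Theory Num.Theory.
Local Open Scope ring_scope.

(* Everything rests on the convolution formula
     tau_a(g f) = sum_(s <= a) tau_s(g) tau_(a-s)(f),
   after which the height conditions kill every term of index < n + m and leave
   tau_m(g) tau_n(f) in index n + m.  The formula is proved by induction on a,
   using the relations that d~^2 = 0 and the chain-map equation impose on the
   blocks, together with r = 0 and delta1 v^q delta2 = 0: in an r-perfect complex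
   these maps have odd degree between modules concentrated in even degrees. *)

(* [zmod_cancel] proves an identity in a Z-module whose two sides agree as formal
   sums up to order: it moves everything to the left and cancels each summand
   against its opposite. *)
Ltac bring_front a s k :=
  lazymatch s with
  | ?x + ?t =>
      first [ unify x a; k constr:(@erefl _ s : s = a + t)
            | bring_front a t ltac:(fun p =>
                k constr:(eq_trans (congr1 (fun z => x + z) p) (addrCA x a _))) ]
  | _ => unify s a; k constr:(esym (addr0 a) : s = a + 0)
  end.

Ltac cancel_pairs :=
  lazymatch goal with
  | |- - ?a + ?s = _ =>
      first [ bring_front a s ltac:(fun p =>
                refine (eq_trans (congr1 (fun z => - a + z) p) _); rewrite addKr)
            | bring_front (- (- a)) s ltac:(fun p =>
                refine (eq_trans (congr1 (fun z => - a + z) p) _); rewrite addNKr) ];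
      cancel_pairs
  | |- ?a + ?s = _ => bring_front (- a) s ltac:(fun p =>
        refine (eq_trans (congr1 (fun z => a + z) p) _); rewrite addNKr); cancel_pairs
  | |- _ => reflexivity
  end.

Ltac zmod_cancel :=
  apply/eqP; rewrite -subr_eq0; apply/eqP;
  rewrite ?opprD ?opprK ?oppr0 ?addr0 ?add0r -?addrA; cancel_pairs.

Set Implicit Arguments.
Unset Strict Implicit.

Lemma split_lshift m n (i : 'I_m) : split (lshift n i) = inl i.
Proof. exact: (unsplitK (inl _ i)). Qed.

Lemma split_rshift m n (i : 'I_n) : split (rshift m i) = inr i.
Proof. exact: (unsplitK (inr _ i)). Qed.

Lemma big_ord_recr_subn (V : nmodType) (F : nat -> nat -> V) n :
  \sum_(s < n.+1) F s (n - s)%N = \sum_(s < n) F s (n.-1 - s).+1 + F n 0.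
Proof.
rewrite big_ord_recr /= subnn; congr (_ + _); apply: eq_bigr => -[s /= lt_sn] _.
by congr (F s); lia.
Qed.

Lemma mulmx_exprS (R : pzSemiRingType) p n (X : 'M[R]_(p, n)) (A : 'M[R]_n) q :
  X *m A ^+ q.+1 = X *m A *m A ^+ q.
Proof. by rewrite exprS -mulmxE mulmxA. Qed.

Lemma mulmx_exprSr (R : pzSemiRingType) p n (X : 'M[R]_(p, n)) (A : 'M[R]_n) q :
  X *m A ^+ q.+1 = X *m A ^+ q *m A.
Proof. by rewrite exprSr -mulmxE mulmxA. Qed.

Section BlockMatrices.

Variables (R : comPzRingType) (m1 m2 m3 n1 n2 n3 : nat).

Lemma mat30 : mat3 0 0 0 0 0 0 0 0 0 = 0 :> 'M[R]_(m1 + m2 + m3, n1 + n2 + n3).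
Proof. by rewrite /mat3 block_mx0 col_mx0 row_mx0 block_mx0. Qed.

Lemma eq_mat3
  (A11 B11 : 'M[R]_(m1, n1)) (A12 B12 : 'M[R]_(m1, n2)) (A13 B13 : 'M[R]_(m1, n3))
  (A21 B21 : 'M[R]_(m2, n1)) (A22 B22 : 'M[R]_(m2, n2)) (A23 B23 : 'M[R]_(m2, n3))
  (A31 B31 : 'M[R]_(m3, n1)) (A32 B32 : 'M[R]_(m3, n2)) (A33 B33 : 'M[R]_(m3, n3)) :
  mat3 A11 A12 A13 A21 A22 A23 A31 A32 A33 = mat3 B11 B12 B13 B21 B22 B23 B31 B32 B33 ->
  [/\ [/\ A11 = B11, A12 = B12 & A13 = B13],
      [/\ A21 = B21, A22 = B22 & A23 = B23] &
      [/\ A31 = B31, A32 = B32 & A33 = B33]].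
Proof.
by move=> /eq_block_mx [/eq_block_mx [-> -> -> ->] /eq_col_mx [-> ->] /eq_row_mx [-> ->] ->].
Qed.

Variables p1 p2 p3 : nat.

Lemma mulmx_mat3
  (A11 : 'M[R]_(m1, n1)) (A12 : 'M[R]_(m1, n2)) (A13 : 'M[R]_(m1, n3))
  (A21 : 'M[R]_(m2, n1)) (A22 : 'M[R]_(m2, n2)) (A23 : 'M[R]_(m2, n3))
  (A31 : 'M[R]_(m3, n1)) (A32 : 'M[R]_(m3, n2)) (A33 : 'M[R]_(m3, n3))
  (B11 : 'M[R]_(n1, p1)) (B12 : 'M[R]_(n1, p2)) (B13 : 'M[R]_(n1, p3))
  (B21 : 'M[R]_(n2, p1)) (B22 : 'M[R]_(n2, p2)) (B23 : 'M[R]_(n2, p3))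
  (B31 : 'M[R]_(n3, p1)) (B32 : 'M[R]_(n3, p2)) (B33 : 'M[R]_(n3, p3)) :
  mat3 A11 A12 A13 A21 A22 A23 A31 A32 A33 *m mat3 B11 B12 B13 B21 B22 B23 B31 B32 B33 =
  mat3 (A11 *m B11 + A12 *m B21 + A13 *m B31)
       (A11 *m B12 + A12 *m B22 + A13 *m B32)
       (A11 *m B13 + A12 *m B23 + A13 *m B33)
       (A21 *m B11 + A22 *m B21 + A23 *m B31)
       (A21 *m B12 + A22 *m B22 + A23 *m B32)
       (A21 *m B13 + A22 *m B23 + A23 *m B33)
       (A31 *m B11 + A32 *m B21 + A33 *m B31)
       (A31 *m B12 + A32 *m B22 + A33 *m B32)
       (A31 *m B13 + A32 *m B23 + A33 *m B33).
Proof.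
rewrite /mat3 !mulmx_block !mul_block_col !mul_col_row !mul_row_block !mul_row_col.
by rewrite !mul_mx_row !mul_col_mx !add_block_mx !add_col_mx !add_row_mx.
Qed.

End BlockMatrices.

Section Homogeneous.

Variable R : comPzRingType.

Lemma homog_mulmx a b c (dS : 'I_a -> int) (dT : 'I_b -> int) (dU : 'I_c -> int)
    k l (A : 'M[R]_(b, a)) (B : 'M[R]_(c, b)) :
  homog dS dT k A -> homog dT dU l B -> homog dS dU (k + l) (B *m A).
Proof.
move=> hA hB i j; rewrite mxE => nz.
have [t /andP [nzB nzA]] : exists t, (B i t != 0) && (A t j != 0).
  apply/existsP; apply: contraR nz => /existsPn H.
  apply/eqP; apply: big1 => t _.
  by case/nandP: (H t) => /negPn/eqP ->; rewrite ?mul0r ?mulr0.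
by rewrite (hB _ _ nzB) (hA _ _ nzA) addrA.
Qed.

Lemma homog_exp a (dS : 'I_a -> int) k (A : 'M[R]_a) q :
  homog dS dS k A -> homog dS dS (k * q%:Z) (A ^+ q).
Proof.
move=> hA; elim: q => [|q IH].
  by move=> i j; rewrite expr0 mxE mulr0 addr0; have [->|_] := eqVneq i j; rewrite ?eqxx.
rewrite exprSr -mulmxE intS mulrDr mulr1.
exact: homog_mulmx hA IH.
Qed.

Lemma homog_odd_eq0 a b (dS : 'I_a -> int) (dT : 'I_b -> int) k (A : 'M[R]_(b, a)) :
  homog dS dT k A -> (forall i, 2 %| dS i)%Z -> (forall i, 2 %| dT i)%Z ->
  ~~ (2 %| k)%Z -> A = 0.
Proof.
move=> hA evS evT odd_k; apply/matrixP => i j; rewrite mxE.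
apply/eqP; apply: contraR odd_k => /hA e.
move: (evS j) (evT i); rewrite e => /dvdzP [x hx] /dvdzP [y hy].
by apply/dvdzP; exists (y - x); lia.
Qed.

End Homogeneous.

Section Complex.

Variables (R : comPzRingType) (C : Scx R).

Lemma homog_dmat_blocks : is_Scx C ->
  [/\ homog (degC C) (degC C) (-2) (sv C), homog (degC C) (degR C) (-1) (sdelta1 C),
      homog (degR C) (degC C) (-2) (sdelta2 C) & homog (degR C) (degR C) (-1) (sr C)].
Proof.
case=> hd _; split=> i j nz.
- move: (hd (lshift _ (rshift _ i)) (lshift _ (lshift _ j))).
  rewrite /dmat /mat3 block_mxEul block_mxEdl /degT /degtot !split_lshift split_rshift.
  by move=> /(_ nz); lia.
- move: (hd (rshift _ i) (lshift _ (lshift _ j))).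
  rewrite /dmat /mat3 block_mxEdl row_mxEl /degT /degtot !split_lshift split_rshift.
  by move=> /(_ nz); lia.
- move: (hd (lshift _ (rshift _ i)) (rshift _ j)).
  rewrite /dmat /mat3 block_mxEur col_mxEd /degT /degtot !split_lshift !split_rshift.
  by move=> /(_ nz); lia.
- move: (hd (rshift _ i) (rshift _ j)).
  by rewrite /dmat /mat3 block_mxEdr /degT /degtot !split_rshift => /(_ nz).
Qed.

Hypothesis CP : rperfect C.

Lemma sr_eq0 : sr C = 0.
Proof.
have [/homog_dmat_blocks [_ _ _ hr] evR] := CP.
by apply: (homog_odd_eq0 hr evR evR).
Qed.

Lemma d1vXd2_eq0 q : sdelta1 C *m sv C ^+ q *m sdelta2 C = 0.
Proof.
have [/homog_dmat_blocks [hv hd1 hd2 _] evR] := CP.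
have hd1vd2 := homog_mulmx (homog_mulmx hd2 (homog_exp (q := q) hv)) hd1.
rewrite -mulmxA; apply: (homog_odd_eq0 hd1vd2 evR evR).
by apply/negP => /dvdzP [x hx]; lia.
Qed.

Lemma dmat_sq_relations :
  [/\ sd C *m sv C = sv C *m sd C + sdelta2 C *m sdelta1 C,
      sd C *m sdelta2 C = 0 & sdelta1 C *m sd C = 0].
Proof.
have [_ dd0] := CP.1; move: dd0.
rewrite /dmat mulmx_mat3 -mat30 sr_eq0 => /eq_mat3 [_ [e21 _ e23] [e31 _ _]].
move: e21 e23 e31; rewrite !mul0mx !mulmx0 !addr0 !add0r mulNmx => e21 e23 e31.
split=> //; last by apply/eqP; rewrite -oppr_eq0 -mulNmx e23.
by apply/eqP; rewrite -subr_eq0 -oppr_eq0 -e21; apply/eqP; zmod_cancel.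
Qed.

(* The [mulmx_] forms carry an arbitrary left factor [X], so that they rewrite
   inside left-nested products. *)
Lemma mulmx_dv p (X : 'M[R]_(p, rkC C)) :
  X *m sd C *m sv C = X *m sv C *m sd C + X *m sdelta2 C *m sdelta1 C.
Proof. by have [dv _ _] := dmat_sq_relations; rewrite -mulmxA dv mulmxDr !mulmxA. Qed.

Lemma mulmx_d1vXd2_eq0 p (X : 'M[R]_(p, rkR C)) q :
  X *m sdelta1 C *m sv C ^+ q *m sdelta2 C = 0.
Proof. by rewrite -[RHS](mulmx0 _ X) -(d1vXd2_eq0 q) !mulmxA. Qed.

Lemma mulmx_dvXd2_eq0 p (X : 'M[R]_(p, rkC C)) q :
  X *m sd C *m sv C ^+ q *m sdelta2 C = 0.
Proof.
have [_ dd2 _] := dmat_sq_relations.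
elim: q p X => [|q IH] p X; first by rewrite expr0 mulmx1 -mulmxA dd2 mulmx0.
by rewrite mulmx_exprS mulmx_dv !mulmxDl IH mulmx_d1vXd2_eq0 add0r.
Qed.

Lemma d1vXd_eq0 q : sdelta1 C *m sv C ^+ q *m sd C = 0.
Proof.
have [dv _ d1d] := dmat_sq_relations.
have vd : sv C *m sd C = sd C *m sv C - sdelta2 C *m sdelta1 C by rewrite dv addrK.
elim: q => [|q IH]; first by rewrite expr0 mulmx1 d1d.
rewrite mulmx_exprSr -mulmxA vd mulmxDr mulmxN !mulmxA IH d1vXd2_eq0.
by rewrite !mul0mx subrr.
Qed.

End Complex.

Section Convolution.

Variables (R : pzSemiRingType) (p q r : nat).
Variables (G : nat -> 'M[R]_(p, q)) (F : nat -> 'M[R]_(q, r)) (n m : nat).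

Definition mxconv j := \sum_(s < j.+1) G s *m F (j - s).

Hypotheses (G0 : forall s, (s < m)%N -> G s = 0) (F0 : forall s, (s < n)%N -> F s = 0).

Lemma mxconv_eq0 j : (j < n + m)%N -> mxconv j = 0.
Proof.
move=> lt_j; apply: big1 => -[s /= lt_s] _.
have [lt_sm | le_ms] := ltnP s m; first by rewrite G0 ?mul0mx.
by rewrite F0 ?mulmx0 //; lia.
Qed.

Lemma mxconv_lead : mxconv (n + m) = G m *m F n.
Proof.
have lt_m : (m < (n + m).+1)%N by lia.
rewrite /mxconv (bigD1 (Ordinal lt_m)) //= addnK big1 ?addr0 // => -[s /= lt_s] ne_sm.
have [lt_sm | le_ms] := ltnP s m; first by rewrite G0 ?mul0mx.
have {}ne_sm : s != m := ne_sm.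
by rewrite F0 ?mulmx0 //; lia.
Qed.

End Convolution.

(* Locked, since rewriting with [mulmxDl] would otherwise unfold it. *)
HB.lock Definition tauY (R : comPzRingType) (C C' : Scx R) (f : Smor C C') a
    : 'M[R]_(rkR C', rkC C) :=
  mDelta1 f *m sv C ^+ a
  + \sum_(j < a) (sdelta1 C' *m sv C' ^+ j *m mmu f *m sv C ^+ (a.-1 - j)).

Section Morphism.

Variables (R : comPzRingType) (C C' : Scx R) (f : Smor C C').

Lemma tauY0 : tauY f 0 = mDelta1 f.
Proof. by rewrite tauY.unlock big_ord0 expr0 mulmx1 addr0. Qed.

Lemma tauS a : tau f a.+1 = sdelta1 C' *m sv C' ^+ a *m mDelta2 f + tauY f a *m sdelta2 C.
Proof. by rewrite tauY.unlock mulmxDl mulmx_suml addrA. Qed.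

Lemma tauYS a : tauY f a.+1 = tauY f a *m sv C + sdelta1 C' *m sv C' ^+ a *m mmu f.
Proof.
rewrite tauY.unlock (big_ord_recr_subn (fun j i => sdelta1 C' *m sv C' ^+ j *m mmu f *m sv C ^+ i)).
rewrite expr0 mulmx1 mulmx_exprSr mulmxDl mulmx_suml addrA; congr (_ + _ + _).
by apply: eq_bigr => j _; rewrite mulmx_exprSr.
Qed.

Variable k : int.
Hypotheses (CP : rperfect C) (CP' : rperfect C') (fM : is_mor k f).

Lemma mmat_chain_relations :
  [/\ sv C' *m mlam f = mlam f *m sv C + sd C' *m mmu f + mmu f *m sd C
        + mDelta2 f *m sdelta1 C - sdelta2 C' *m mDelta1 f,
      mlam f *m sdelta2 C = sdelta2 C' *m mrho f - sd C' *m mDelta2 f &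
      sdelta1 C' *m mlam f = mDelta1 f *m sd C + mrho f *m sdelta1 C].
Proof.
have [_] := fM; rewrite /dmat /mmat !mulmx_mat3 (sr_eq0 CP) (sr_eq0 CP').
move=> /eq_mat3 [_ [e21 _ e23] [e31 _ _]].
move: e21 e23 e31; rewrite !mul0mx !mulmx0 !addr0 !add0r !mulNmx => e21 e23 e31.
split=> //; last by rewrite -e23 addrC.
transitivity (sv C' *m mlam f - sd C' *m mmu f + sdelta2 C' *m mDelta1 f
                + sd C' *m mmu f - sdelta2 C' *m mDelta1 f); first by zmod_cancel.
by rewrite e21; zmod_cancel.
Qed.

Lemma mulmx_vlam p (X : 'M[R]_(p, rkC C')) :
  X *m sv C' *m mlam f = X *m mlam f *m sv C + X *m sd C' *m mmu f + X *m mmu f *m sd C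
    + X *m mDelta2 f *m sdelta1 C - X *m sdelta2 C' *m mDelta1 f.
Proof.
have [vlam _ _] := mmat_chain_relations.
by rewrite -mulmxA vlam !mulmxDr mulmxN !mulmxA.
Qed.

Lemma mulmx_lamd2 p (X : 'M[R]_(p, rkC C')) :
  X *m mlam f *m sdelta2 C = X *m sdelta2 C' *m mrho f - X *m sd C' *m mDelta2 f.
Proof.
have [_ lamd2 _] := mmat_chain_relations.
by rewrite -mulmxA lamd2 mulmxDr mulmxN !mulmxA.
Qed.

Lemma d1vXlam a :
  sdelta1 C' *m sv C' ^+ a *m mlam f =
  \sum_(s < a.+1) (tau f s *m sdelta1 C *m sv C ^+ (a - s)) + tauY f a *m sd C.
Proof.
elim: a => [|a IH].
  have [_ _ d1lam] := mmat_chain_relations.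
  by rewrite big_ord1 expr0 !mulmx1 tauY0 d1lam addrC.
rewrite mulmx_exprSr mulmx_vlam IH (d1vXd_eq0 CP' a) (d1vXd2_eq0 CP' a) !mul0mx addr0 subr0.
rewrite [in RHS](big_ord_recr_subn (fun s i => tau f s *m sdelta1 C *m sv C ^+ i)).
rewrite tauS tauYS expr0 mulmx1 !mulmxDl mulmx_suml (mulmx_dv CP).
under [in RHS]eq_bigr do rewrite mulmx_exprSr.
by zmod_cancel.
Qed.

End Morphism.

Section Composition.

Variables (R : comPzRingType) (C C' C'' : Scx R) (g : Smor C' C'') (f : Smor C C').

Definition Smor_comp : Smor C C'' :=
  {| mlam := mlam g *m mlam f;
     mmu := mmu g *m mlam f + mlam g *m mmu f + mDelta2 g *m mDelta1 f;
     mDelta2 := mlam g *m mDelta2 f + mDelta2 g *m mrho f;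
     mDelta1 := mDelta1 g *m mlam f + mrho g *m mDelta1 f;
     mrho := mrho g *m mrho f |}.

Lemma mmat_comp : mmat Smor_comp = mmat g *m mmat f.
Proof. by rewrite /mmat mulmx_mat3 /= !mul0mx !mulmx0 !addr0 !add0r. Qed.

Lemma is_mor_comp k k' : is_mor k f -> is_mor k' g -> is_mor (k' + k) Smor_comp.
Proof.
move=> [hf ff] [hg fg]; rewrite /is_mor mmat_comp addrC; split.
  exact: homog_mulmx hf hg.
by rewrite mulmxA fg -!mulmxA ff.
Qed.

Variables k k' : int.
Hypotheses (CP : rperfect C) (CP' : rperfect C') (CP'' : rperfect C'').
Hypotheses (fM : is_mor k f) (gM : is_mor k' g).

Lemma tauY_comp_vXd2 a q :
  tauY Smor_comp a *m sv C ^+ q *m sdelta2 C =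
  tauY g a *m mlam f *m sv C ^+ q *m sdelta2 C
  + \sum_(s < a.+1) (tau g s *m tauY f (a - s) *m sv C ^+ q *m sdelta2 C).
Proof.
elim: a q => [|a IH] q; first by rewrite big_ord1 !tauY0 /= !mulmxDl.
rewrite tauYS !mulmxDl -mulmx_exprS IH.
rewrite (big_ord_recr_subn (fun s i => tau g s *m tauY f i *m sv C ^+ q *m sdelta2 C)).
under [in RHS]eq_bigr do rewrite tauYS mulmxDr !mulmxDl !mulmxA -mulmx_exprS.
rewrite big_split tauY0 tauS tauYS /=.
rewrite !mulmxDr !mulmxDl !mulmxA (d1vXlam CP' CP'' gM) (mulmx_vlam CP CP' fM).
rewrite !mulmxDl ?mulmxN ?mulNmx !mulmx_suml (mulmx_dvXd2_eq0 CP) (mulmx_d1vXd2_eq0 CP).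
by rewrite -mulmx_exprS; zmod_cancel.
Qed.

Lemma tau_comp a : tau Smor_comp a = mxconv (tau g) (tau f) a.
Proof.
rewrite /mxconv; case: a => [|a]; first by rewrite big_ord1.
move: (tauY_comp_vXd2 a 0); under eq_bigr do rewrite expr0 mulmx1.
rewrite expr0 !mulmx1 tauS => ->.
rewrite (big_ord_recr_subn (fun s i => tau g s *m tau f i)).
under [in RHS]eq_bigr do rewrite tauS mulmxDr !mulmxA.
rewrite big_split tauS /= !mulmxDr !mulmxDl !mulmxA (d1vXlam CP' CP'' gM) (mulmx_lamd2 CP CP' fM).
by rewrite !mulmxDl ?mulmxN !mulmx_suml; zmod_cancel.
Qed.

End Composition.

Theorem lemma2p15 (R : comPzRingType) (C C' C'' : Scx R) (k k' : int)
  (n m : nat) (f : Smor C C') (g : Smor C' C'') :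
  rperfect C -> rperfect C' -> rperfect C'' ->
  height k n f -> height k' m g ->
  exists h : Smor C C'',
    mmat h = mmat g *m mmat f /\
    height (k' + k) (n + m) h /\
    (strong_height k n f -> strong_height k' m g ->
     strong_height (k' + k) (n + m) h).
Proof.
move=> CP CP' CP'' [fM k_even _ _ tauf0] [gM k'_even _ _ taug0].
have tau_gf := tau_comp CP CP' CP'' fM gM.
have gf_height : height (k' + k) (n + m) (Smor_comp g f).
  split=> //.
  - exact: is_mor_comp.
  - exact: rpredD.
  - by move=> j lt_j; rewrite tau_gf (mxconv_eq0 taug0 tauf0).
exists (Smor_comp g f); split; first exact: mmat_comp.
split=> // -[_ [invf [invf_l invf_r]]] [_ [invg [invg_l invg_r]]]; split=> //.
exists (invf *m invg); rewrite tau_gf (mxconv_lead taug0 tauf0); split.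
- by rewrite mulmxA -(mulmxA invf) invg_l mulmx1 invf_l.
- by rewrite mulmxA -(mulmxA _ (tau f n)) invf_r mulmx1 invg_r.
Qed.
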